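(* Let $n\ge 2$, $b>0$, and let $p_0,\dots,p_{n-2}$ be complex-valued, $C^\infty$, $b$-periodic functions on $\mathbb{R}$; let $\mathcal{L}u := u^{(n)}+\sum_{k=0}^{n-2}p_k(x)u^{(k)}$. Fix $l\in\{0,1,\dots,2n-1\}$, let $S_l=\{\zeta\in\mathbb{C}: l\pi/n\le\arg\zeta\le(l+1)\pi/n\}$, fix $B\ge b$, and let $\omega_1,\dots,\omega_n$ be the $n$ distinct $n$-th roots of unity. Suppose that there are constants $Z,K>0$ such that for every $\zeta\in S_l$ with $|\zeta|>Z$, $y_1=y_1(x;\zeta),\dots,y_n=y_n(x;\zeta)$ are linearly independent solutions of $\mathcal{L}y=\zeta^n y$ satisfying $$\left|\frac{y_j^{(k-1)}(x;\zeta)}{\omega_j^{k-1}\zeta^{k-1}e^{\omega_j\zeta x}}-1\right|\le\frac{K}{|\zeta|},\qquad j,k=1,\dots,n,\ x\in[0,B].$$ Let $Y=[\gamma_{ij}]_{1\le i,j\le n}$ be the matrix of the shift $(\mathcal{T}f)(x)=f(x+b)$ with respect to the basis $y_1,\dots,y_n$, i.e. $y_j(x+b)=\sum_{i=1}^n\gamma_{ij}y_i(x)$. Then $$\gamma_{ij}=e^{\omega_j\zeta b}\left[\delta_{ij}+O(\zeta^{-1})\right]\qquad\text{as }\zeta\to\infty,\ \zeta\in S_l .$$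
   Context: Such solutions $y_j$ (called Naimark solutions) exist for $|\zeta|$ sufficiently large in each sector $S_l$. $\delta_{ij}$ is the Kronecker delta. *)

From Stdlib Require Import Reals Arith.
From Coquelicot Require Export Coquelicot.
Open Scope R_scope.

Definition cexp (z : C) : C :=
  (exp (Re z) * cos (Im z), exp (Re z) * sin (Im z)).

Definition derivs_upto (m : nat) (f : R -> C) (D : nat -> R -> C) : Prop :=
  (forall x, D 0%nat x = f x) /\
  (forall k x, (k < m)%nat -> is_derive (D k) x (D (S k) x)).

Definition smooth (f : R -> C) : Prop :=
  exists D : nat -> R -> C,
    (forall x, D 0%nat x = f x) /\
    (forall k x, is_derive (D k) x (D (S k) x)).

Definition sector (n l : nat) (z : C) : Prop :=
  exists theta : R,
    INR l * PI / INR n <= theta <= (INR l + 1) * PI / INR n /\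
    z = (Cmod z * cos theta, Cmod z * sin theta).

Definition kdelta (i j : nat) : C := if Nat.eqb i j then 1%C else 0%C.

From Stdlib Require Import Reals Lia Lra.
From Coquelicot Require Import Coquelicot.
Open Scope R_scope.

(* Differentiating y_j(x + b) = sum_i gamma_ij y_i(x) k times and evaluating at
   x = 0 gives, for k < n, the linear system sum_i gamma_ij y_i^(k)(0) = y_j^(k)(b).
   By the asymptotics, y_i^(k)(0) = (omega_i zeta)^k (1 + e_ik) and
   y_j^(k)(b) = (omega_j zeta)^k e^(omega_j zeta b) (1 + e'_k) with |e|, |e'| <= K/|zeta|,
   so c_i = gamma_ij e^(-omega_j zeta b) solves a perturbation of the Vandermonde system
   sum_i c_i omega_i^k = omega_j^k.  Its matrix is the discrete Fourier matrix, which the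
   orthogonality of the n-th roots of unity inverts with entries of modulus 1/n; hence
   |c_i - delta_ij| <= eta (1 + sum_i |c_i|) with eta = K/|zeta|, and once n eta <= 1/2
   this forces sum_i |c_i| <= 3 and |c_i - delta_ij| <= 4 eta. *)

Lemma sum_n_single {G : AbelianMonoid} (a : nat -> G) N m :
  (m <= N)%nat -> (forall i, (i <= N)%nat -> i <> m -> a i = zero) -> sum_n a N = a m.
Proof.
  induction N as [|N IH]; intros Hm Ha.
  - rewrite sum_O. now replace m with 0%nat by lia.
  - rewrite sum_Sn. destruct (Nat.eq_dec m (S N)) as [->|Hne].
    + rewrite (sum_n_ext_loc _ (fun _ => zero)); [|intros i Hi; apply Ha; lia].
      unfold sum_n; rewrite sum_n_m_const_zero; apply plus_zero_l.
    + rewrite IH, (Ha (S N)) by (try intros i Hi; try apply Ha; lia).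
      apply plus_zero_r.
Qed.

Lemma Cmod_sum_n_le (f : nat -> C) (a : nat -> R) N :
  (forall i, (i <= N)%nat -> Cmod (f i) <= a i) -> Cmod (sum_n f N) <= sum_n a N.
Proof.
  induction N as [|N IH]; intros Hf.
  - rewrite !sum_O. auto.
  - rewrite !sum_Sn. eapply Rle_trans; [apply Cmod_triangle|].
    apply Rplus_le_compat; [apply IH; intros; apply Hf|apply Hf]; lia.
Qed.

Lemma sum_n_Cmult_l (c : C) (f : nat -> C) N :
  sum_n (fun i => (c * f i)%C) N = (c * sum_n f N)%C.
Proof. exact (@sum_n_mult_l C_Ring c f N). Qed.

Lemma sum_n_Rle (f g : nat -> R) N :
  (forall i, (i <= N)%nat -> f i <= g i) -> sum_n f N <= sum_n g N.
Proof. intros Hfg. rewrite !sum_n_Reals. now apply sum_Rle. Qed.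

Lemma sum_n_Rplus (f g : nat -> R) N :
  sum_n (fun i => f i + g i) N = sum_n f N + sum_n g N.
Proof. exact (@sum_n_plus R_AbelianMonoid f g N). Qed.

(* The [:> C] annotations state equations in [C] instead of in the carrier of
   [C_AbelianMonoid], where [ring] and [field] do not apply. *)
Lemma sum_n_Cext (f g : nat -> C) N :
  (forall i, (i <= N)%nat -> f i = g i) -> sum_n f N = sum_n g N :> C.
Proof. exact (sum_n_ext_loc f g N). Qed.

Lemma sum_n_Cplus (f g : nat -> C) N :
  sum_n (fun i => f i + g i)%C N = (sum_n f N + sum_n g N)%C :> C.
Proof. exact (@sum_n_plus C_AbelianMonoid f g N). Qed.

Lemma sum_n_Cminus (f g : nat -> C) N :
  sum_n (fun i => f i - g i)%C N = (sum_n f N - sum_n g N)%C :> C.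
Proof.
  induction N as [|N IH]; [now rewrite !sum_O|].
  rewrite !sum_Sn. change plus with Cplus. rewrite IH. ring.
Qed.

Lemma Cgeom_sum (r : C) N : ((r - 1) * sum_n (fun k => r ^ k) N = r ^ S N - 1)%C.
Proof.
  induction N as [|N IH].
  - rewrite sum_O. simpl. ring.
  - rewrite sum_Sn. change plus with Cplus.
    rewrite Cmult_plus_distr_l, IH, !Cpow_S. ring.
Qed.

Lemma Cmod_root_of_unity (w : C) N : (w ^ S N = 1)%C -> Cmod w = 1.
Proof.
  intros Hw. assert (Hpow : Cmod w ^ S N = 1) by now rewrite <- Cmod_pow, Hw, Cmod_1.
  destruct (pow_R1 _ _ Hpow) as [Habs|]; [|lia].
  now rewrite Rabs_pos_eq in Habs by apply Cmod_ge_0.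
Qed.

Lemma root_of_unity_neq_0 (w : C) N : (w ^ S N = 1)%C -> w <> 0%C.
Proof. intros Hw H0. rewrite H0, Cpow_S, Cmult_0_l in Hw. now apply C1_nz. Qed.

Lemma sum_n_C_one N : sum_n (fun _ => RtoC 1) N = RtoC (INR (S N)).
Proof.
  induction N as [|N IH]; [now rewrite sum_O|].
  rewrite sum_Sn, IH, (S_INR (S N)), RtoC_plus. reflexivity.
Qed.

(* [w m ^ N] is the inverse of [w m]. *)
Lemma roots_of_unity_orthogonality (w : nat -> C) N :
  (forall i, (i <= N)%nat -> (w i ^ S N = 1)%C) ->
  (forall i j, (i <= N)%nat -> (j <= N)%nat -> w i = w j -> i = j) ->
  forall i m, (i <= N)%nat -> (m <= N)%nat ->
  sum_n (fun k => (w m ^ N * w i) ^ k)%C N = (RtoC (INR (S N)) * kdelta i m)%C :> C.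
Proof.
  intros Hroot Hinj i m Hi Hm.
  assert (Hinv : (w m * w m ^ N = 1)%C) by (rewrite <- Cpow_S; auto).
  unfold kdelta. destruct (Nat.eqb_spec i m) as [->|Hne].
  - rewrite (sum_n_ext _ (fun _ => RtoC 1)), sum_n_C_one; [ring|].
    intros k. rewrite Cmult_comm, Hinv. apply Cpow_1_l.
  - set (r := (w m ^ N * w i)%C).
    assert (Hr1 : r <> 1%C).
    { intros Hr. apply Hne, Hinj; auto.
      transitivity (w m * r)%C; [unfold r; rewrite Cmult_assoc, Hinv; ring|].
      rewrite Hr. ring. }
    assert (Hrn : (r ^ S N = 1)%C).
    { unfold r. rewrite Cpow_mult_l, <- Cpow_mult_r, Nat.mul_comm, Cpow_mult_r, Hroot, Hroot
        by auto. rewrite Cpow_1_l. ring. }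
    assert (Hr0 : (r - 1 <> 0)%C).
    { intros H. apply Hr1. transitivity ((r - 1) + 1)%C; [ring|]. rewrite H. ring. }
    pose proof (Cgeom_sum r N) as Hgeom. rewrite Hrn in Hgeom.
    set (s := sum_n (fun k => r ^ k)%C N) in *.
    replace s with (/ (r - 1) * ((r - 1) * s))%C by (field; auto).
    rewrite Hgeom. ring.
Qed.

Section RootsOfUnitySystem.

Variables (N : nat) (w : nat -> C).
Hypothesis Hroot : forall i, (i <= N)%nat -> (w i ^ S N = 1)%C.
Hypothesis Hinj : forall i j, (i <= N)%nat -> (j <= N)%nat -> w i = w j -> i = j.

Lemma sum_n_kdelta_l (f : nat -> C) j :
  (j <= N)%nat -> sum_n (fun i => kdelta i j * f i)%C N = f j :> C.
Proof.
  intros Hj. rewrite (sum_n_single _ N j Hj); unfold kdelta.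
  - rewrite Nat.eqb_refl. apply Cmult_1_l.
  - intros i Hi Hne. apply Nat.eqb_neq in Hne. rewrite Hne. apply Cmult_0_l.
Qed.

Lemma roots_of_unity_inversion (a r : nat -> C) :
  (forall k, (k <= N)%nat -> sum_n (fun i => a i * w i ^ k)%C N = r k :> C) ->
  forall m, (m <= N)%nat ->
  (RtoC (INR (S N)) * a m)%C = sum_n (fun k => (w m ^ N) ^ k * r k)%C N.
Proof.
  intros Hsys m Hm.
  rewrite (sum_n_Cext _ (fun k => sum_n (fun i => a i * (w m ^ N * w i) ^ k) N)%C).
  2:{ intros k Hk. rewrite <- Hsys, <- sum_n_Cmult_l by exact Hk.
      apply sum_n_Cext. intros i _. rewrite Cpow_mult_l. ring. }
  rewrite sum_n_switch.
  rewrite (sum_n_Cext _ (fun i => kdelta i m * (RtoC (INR (S N)) * a i))%C).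
  - now rewrite sum_n_kdelta_l.
  - intros i Hi. rewrite sum_n_Cmult_l, roots_of_unity_orthogonality by auto. ring.
Qed.

Lemma roots_of_unity_system_bound (a r : nat -> C) (rho : R) :
  (forall k, (k <= N)%nat -> sum_n (fun i => a i * w i ^ k)%C N = r k :> C) ->
  (forall k, (k <= N)%nat -> Cmod (r k) <= rho) ->
  forall m, (m <= N)%nat -> Cmod (a m) <= rho.
Proof.
  intros Hsys Hr m Hm.
  assert (HN : 0 < INR (S N)) by apply lt_0_INR, Nat.lt_0_succ.
  apply (Rmult_le_reg_l (INR (S N))); [exact HN|].
  rewrite <- (Rabs_pos_eq (INR (S N))) at 1 by lra.
  rewrite <- Cmod_R, <- Cmod_mult, (roots_of_unity_inversion a r Hsys m Hm).
  rewrite <- sum_n_const.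
  apply Cmod_sum_n_le. intros k Hk.
  rewrite Cmod_mult, Cmod_pow, Cmod_pow, (Cmod_root_of_unity _ N (Hroot m Hm)), !pow1.
  rewrite Rmult_1_l. auto.
Qed.

Section Perturbation.

Variables (j : nat) (c : nat -> C) (e : nat -> nat -> C) (e' : nat -> C) (eta : R).
Hypothesis Hj : (j <= N)%nat.
Hypothesis He : forall i k, (i <= N)%nat -> (k <= N)%nat -> Cmod (e i k) <= eta.
Hypothesis He' : forall k, (k <= N)%nat -> Cmod (e' k) <= eta.
Hypothesis Hsys : forall k, (k <= N)%nat ->
  sum_n (fun i => c i * w i ^ k * (1 + e i k))%C N = (w j ^ k * (1 + e' k))%C.

Lemma perturbed_system_bound_l1 m : (m <= N)%nat ->
  Cmod (c m - kdelta m j) <= eta * (1 + sum_n (fun i => Cmod (c i)) N).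
Proof.
  (* [c - delta_j] solves the unperturbed system with the error terms as right-hand side. *)
  apply (roots_of_unity_system_bound (fun i => c i - kdelta i j)%C
           (fun k => w j ^ k * e' k - sum_n (fun i => c i * w i ^ k * e i k) N)%C).
  - intros k Hk.
    assert (Hsplit := Hsys k Hk).
    rewrite (sum_n_Cext _ (fun i => c i * w i ^ k + c i * w i ^ k * e i k)%C), sum_n_Cplus
      in Hsplit by (intros i _; ring).
    rewrite (sum_n_Cext _ (fun i => c i * w i ^ k - kdelta i j * w i ^ k)%C),
      sum_n_Cminus, sum_n_kdelta_l by (try intros i _; auto; ring).
    set (A := sum_n (fun i => c i * w i ^ k)%C N) in *.
    set (B := sum_n (fun i => c i * w i ^ k * e i k)%C N) in *.
    transitivity ((A + B) - B - w j ^ k)%C; [ring|]. rewrite Hsplit. ring.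
  - intros k Hk.
    eapply Rle_trans; [apply Cmod_triangle|]. rewrite Cmod_opp.
    rewrite Rmult_plus_distr_l, Rmult_1_r, Rmult_comm.
    apply Rplus_le_compat.
    + rewrite Cmod_mult, Cmod_pow, (Cmod_root_of_unity _ N (Hroot j Hj)), pow1.
      rewrite Rmult_1_l. auto.
    + rewrite <- (sum_n_mult_r (K := R_Ring)).
      apply Cmod_sum_n_le. intros i Hi.
      rewrite !Cmod_mult, Cmod_pow, (Cmod_root_of_unity _ N (Hroot i Hi)), pow1, Rmult_1_r.
      apply Rmult_le_compat_l; [apply Cmod_ge_0|auto].
Qed.

Lemma perturbed_system_bound (Heta : 0 <= eta)
  (Hsmall : INR (S N) * eta <= 1 / 2) m :
  (m <= N)%nat -> Cmod (c m - kdelta m j) <= 4 * eta.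
Proof.
  intros Hm.
  set (s1 := sum_n (fun i => Cmod (c i)) N) in *.
  assert (Hs1 : 0 <= s1).
  { apply Rle_trans with (sum_n (fun _ => 0) N).
    - rewrite sum_n_const. lra.
    - apply sum_n_Rle. intros; apply Cmod_ge_0. }
  assert (Hdelta : sum_n (fun i => Cmod (kdelta i j)) N = 1).
  { rewrite (sum_n_single _ N j Hj).
    - unfold kdelta. rewrite Nat.eqb_refl. apply Cmod_1.
    - intros i Hi Hne. unfold kdelta. apply Nat.eqb_neq in Hne. rewrite Hne. apply Cmod_0. }
  (* Summing the previous bound over i; with n eta <= 1/2 it forces s1 <= 3. *)
  assert (Hs1_bound : s1 <= 1 + INR (S N) * (eta * (1 + s1))).
  { rewrite <- Hdelta at 1. rewrite <- sum_n_const, <- sum_n_Rplus.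
    apply sum_n_Rle. intros i Hi.
    replace (c i) with (kdelta i j + (c i - kdelta i j))%C at 1 by ring.
    eapply Rle_trans; [apply Cmod_triangle|].
    apply Rplus_le_compat_l, perturbed_system_bound_l1, Hi. }
  assert (Hs1_le3 : s1 <= 3) by nra.
  eapply Rle_trans; [apply perturbed_system_bound_l1, Hm|]. fold s1. nra.
Qed.

End Perturbation.

End RootsOfUnitySystem.

Lemma is_linear_Cmult_l (c : C) :
  is_linear (K := R_AbsRing) (U := C_R_NormedModule) (V := C_R_NormedModule)
    (fun z => (c * z)%C).
Proof.
  apply Build_is_linear.
  - intros u v. change ((c * (u + v))%C = (c * u + c * v)%C). ring.
  - intros k u. rewrite !scal_R_Cmult. change ((c * (k * u))%C = (k * (c * u))%C). ring.
  - exists (Cmod c + 1). split; [pose proof (Cmod_ge_0 c); lra|].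
    intros u. rewrite <- !Cmod_norm, Cmod_mult.
    pose proof (Cmod_ge_0 u). nra.
Qed.

Lemma is_derive_linear_comp {V W : NormedModule R_AbsRing} (h : V -> W) (f : R -> V) x l :
  is_linear h -> is_derive f x l -> is_derive (fun t => h (f t)) x (h l).
Proof.
  intros Hh Hf. unfold is_derive in *.
  eapply filterdiff_ext_lin.
  - eapply filterdiff_comp; [exact Hf|]. now apply filterdiff_linear.
  - intros t. simpl. now apply linear_scal.
Qed.

Lemma is_derive_C_unique (f : R -> C) x l1 l2 :
  is_derive (V := C_R_NormedModule) f x l1 ->
  is_derive (V := C_R_NormedModule) f x l2 -> l1 = l2.
Proof.
  intros H1 H2.
  assert (Hproj : forall p : C_R_NormedModule -> R_NormedModule, is_linear p -> p l1 = p l2).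
  { intros p Hp. transitivity (Derive (fun t => p (f t)) x).
    - symmetry. exact (is_derive_unique _ _ _ (is_derive_linear_comp _ _ _ _ Hp H1)).
    - exact (is_derive_unique _ _ _ (is_derive_linear_comp _ _ _ _ Hp H2)). }
  apply injective_projections; apply Hproj.
  - exact (@is_linear_fst R_AbsRing R_NormedModule R_NormedModule).
  - exact (@is_linear_snd R_AbsRing R_NormedModule R_NormedModule).
Qed.

Lemma derivs_upto_shift_relation (m N : nat) (b : R) (h : R -> C) (Dh : nat -> R -> C)
  (f : nat -> R -> C) (D : nat -> nat -> R -> C) (g : nat -> C) :
  derivs_upto m h Dh -> (forall i, (i <= N)%nat -> derivs_upto m (f i) (D i)) ->
  (forall x, h (x + b) = sum_n (fun i => g i * f i x)%C N) ->
  forall k, (k <= m)%nat -> forall x, Dh k (x + b) = sum_n (fun i => g i * D i k x)%C N.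
Proof.
  intros [Dh0 Dh'] HD Hshift k. induction k as [|k IH]; intros Hk x.
  - rewrite Dh0, Hshift. apply sum_n_ext_loc. intros i Hi.
    now destruct (HD i Hi) as [-> _].
  - assert (Hlhs : is_derive (V := C_R_NormedModule) (fun t => Dh k (t + b)) x
                     (Dh (S k) (x + b))).
    { assert (Htrans : is_derive (fun t : R => t + b) x one) by (auto_derive; [easy|reflexivity]).
      rewrite <- (@scal_one R_Ring C_R_ModuleSpace (Dh (S k) (x + b))).
      exact (is_derive_comp (V := C_R_NormedModule) (Dh k) (fun t => t + b) x _ _
               (Dh' k (x + b) ltac:(lia)) Htrans). }
    assert (Hrhs : is_derive (V := C_R_NormedModule)
                     (fun t => sum_n (fun i => g i * D i k t)%C N) x
                     (sum_n (fun i => g i * D i (S k) x)%C N)).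
    { apply (is_derive_sum_n (fun i t => g i * D i k t)%C). intros i Hi.
      apply (is_derive_linear_comp (fun z => g i * z)%C); [apply is_linear_Cmult_l|].
      destruct (HD i Hi) as [_ HDi]. apply HDi. lia. }
    apply (is_derive_C_unique _ x _ _ Hlhs).
    eapply is_derive_ext; [|exact Hrhs]. intros t. simpl. rewrite IH by lia. reflexivity.
Qed.

Lemma normalized_shift_system N (zeta E Einv : C) (w g d0 : nat -> C) (db : C) j k :
  zeta <> 0%C -> (forall i, (i <= N)%nat -> w i <> 0%C) -> (j <= N)%nat ->
  (Einv * E = 1)%C -> db = sum_n (fun i => g i * d0 i)%C N ->
  sum_n (fun i => g i * Einv * w i ^ k * (1 + (d0 i / (w i ^ k * zeta ^ k) - 1)))%C N
  = (w j ^ k * (1 + (db / (w j ^ k * zeta ^ k * E) - 1)))%C :> C.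
Proof.
  intros Hzeta Hw Hj HE Hdb.
  assert (HE0 : E <> 0%C).
  { intros H0. rewrite H0, Cmult_0_r in HE. now apply C1_nz. }
  assert (Hzk : (zeta ^ k <> 0)%C) by now apply Cpow_nz.
  rewrite (sum_n_Cext _ (fun i => Einv / zeta ^ k * (g i * d0 i))%C).
  - rewrite sum_n_Cmult_l, <- Hdb.
    replace Einv with (/ E)%C by (rewrite <- (Cmult_1_l (/ E)), <- HE; field; exact HE0).
    field. repeat split; auto. now apply Cpow_nz, Hw.
  - intros i Hi. assert (Hwk : (w i ^ k <> 0)%C) by now apply Cpow_nz, Hw.
    field. now split.
Qed.

Lemma cexp_opp_mult (z : C) : (cexp (- z) * cexp z = 1)%C.
Proof.
  destruct z as [a t]. unfold cexp, Re, Im. simpl.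
  rewrite cos_neg, sin_neg, exp_Ropp.
  assert (Hexp := exp_pos a). assert (Hpyth := sin2_cos2 t). unfold Rsqr in Hpyth.
  apply injective_projections; simpl; field_simplify; nra.
Qed.

Lemma cexp_0 : cexp 0 = 1%C.
Proof.
  unfold cexp, Re, Im. simpl. rewrite exp_0, cos_0, sin_0.
  apply injective_projections; simpl; ring.
Qed.

Lemma nat_bounded_choice {A : Type} (a0 : A) (P : nat -> A -> Prop) n :
  (forall i, (i < n)%nat -> exists x, P i x) ->
  exists F : nat -> A, forall i, (i < n)%nat -> P i (F i).
Proof.
  induction n as [|n IH]; intros H.
  - exists (fun _ => a0). intros; lia.
  - destruct IH as [F HF]; [intros; apply H; lia|].
    destruct (H n (Nat.lt_succ_diag_r n)) as [x Hx].
    exists (fun i => if Nat.eqb i n then x else F i). intros i Hi.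
    destruct (Nat.eqb_spec i n) as [->|Hne]; [exact Hx|]. apply HF. lia.
Qed.

Lemma shift_matrix_near_diagonal N (zeta : C) (b B eta : R) (w : nat -> C)
  (gamma : nat -> nat -> C) (y : nat -> R -> C) (D : nat -> nat -> R -> C) :
  zeta <> 0%C -> 0 <= b <= B -> 0 <= eta -> INR (S N) * eta <= 1 / 2 ->
  (forall i, (i <= N)%nat -> (w i ^ S N = 1)%C) ->
  (forall i j, (i <= N)%nat -> (j <= N)%nat -> w i = w j -> i = j) ->
  (forall i, (i <= N)%nat -> derivs_upto (S N) (y i) (D i)) ->
  (forall i k x, (i <= N)%nat -> (k <= N)%nat -> 0 <= x <= B ->
     Cmod (D i k x / (w i ^ k * zeta ^ k * cexp (w i * zeta * x)) - 1) <= eta) ->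
  (forall j x, (j <= N)%nat -> y j (x + b) = sum_n (fun i => gamma i j * y i x)%C N) ->
  forall i j, (i <= N)%nat -> (j <= N)%nat ->
  Cmod (gamma i j * cexp (- (w j * zeta * b)) - kdelta i j) <= 4 * eta.
Proof.
  intros Hzeta Hb Heta Hsmall Hroot Hinj HD Hest Hgamma i j Hi Hj.
  assert (Hshift : forall k, (k <= N)%nat ->
            D j k (0 + b) = sum_n (fun i => gamma i j * D i k 0)%C N).
  { intros k Hk. apply (derivs_upto_shift_relation (S N) N b (y j) (D j) y D); auto. }
  apply (perturbed_system_bound N w Hroot Hinj) with
    (c := fun i => (gamma i j * cexp (- (w j * zeta * b)))%C)
    (e := fun i k => (D i k 0 / (w i ^ k * zeta ^ k) - 1)%C)
    (e' := fun k => (D j k b / (w j ^ k * zeta ^ k * cexp (w j * zeta * b)) - 1)%C);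
    auto.
  - intros i' k Hi' Hk. specialize (Hest i' k 0 Hi' Hk ltac:(lra)).
    now rewrite Cmult_0_r, cexp_0, Cmult_1_r in Hest.
  - intros k Hk. apply normalized_shift_system; auto.
    + intros i' Hi'. now apply (root_of_unity_neq_0 _ N), Hroot.
    + apply cexp_opp_mult.
    + rewrite <- Hshift, Rplus_0_l by exact Hk. reflexivity.
Qed.

Theorem theorem1
  (n : nat) (b B : R) (l : nat) (Z K : R)
  (p : nat -> R -> C)
  (omega : nat -> C)
  (y : C -> nat -> R -> C)
  (gamma : C -> nat -> nat -> C)
  (Hn : (2 <= n)%nat)
  (Hb : 0 < b)
  (Hsmooth : forall k, (k <= n - 2)%nat -> smooth (p k))
  (Hper : forall k x, (k <= n - 2)%nat -> p k (x + b) = p k x)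
  (Hl : (l <= 2 * n - 1)%nat)
  (HB : b <= B)
  (Homega_root : forall j, (j < n)%nat -> Cpow (omega j) n = 1%C)
  (Homega_inj : forall i j, (i < n)%nat -> (j < n)%nat -> omega i = omega j -> i = j)
  (HZ : 0 < Z) (HK : 0 < K)
  (Hindep : forall zeta : C, sector n l zeta -> Z < Cmod zeta ->
     forall c : nat -> C,
       (forall x, sum_n (fun j => (c j * y zeta j x)%C) (n - 1) = RtoC 0) ->
       forall j, (j < n)%nat -> c j = RtoC 0)
  (Hsol : forall zeta : C, sector n l zeta -> Z < Cmod zeta ->
     forall j, (j < n)%nat ->
       exists D : nat -> R -> C,
         derivs_upto n (y zeta j) D /\
         (* L y_j = zeta^n y_j *)
         (forall x, (D n x + sum_n (fun k => (p k x * D k x)%C) (n - 2))%C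
                    = (Cpow zeta n * D 0%nat x)%C) /\
         (* asymptotic estimates on [0, B] *)
         (forall k x, (k < n)%nat -> 0 <= x <= B ->
            Cmod ((D k x / (Cpow (omega j) k * Cpow zeta k
                             * cexp (omega j * zeta * RtoC x)))%C - 1%C)
              <= K / Cmod zeta))
  (Hgamma : forall zeta : C, sector n l zeta -> Z < Cmod zeta ->
     forall j x, (j < n)%nat ->
       y zeta j (x + b) = sum_n (fun i => (gamma zeta i j * y zeta i x)%C) (n - 1)) :
  exists M Z0 : R, 0 < M /\
    forall zeta : C, sector n l zeta -> Z0 < Cmod zeta ->
      forall i j, (i < n)%nat -> (j < n)%nat ->
        Cmod ((gamma zeta i j * cexp (- (omega j * zeta * RtoC b)))%C - kdelta i j)
          <= M / Cmod zeta.
Proof.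
  set (N := (n - 1)%nat).
  assert (HN : S N = n) by (unfold N; lia).
  exists (4 * K), (Z + 2 * INR n * K). split; [lra|].
  intros zeta Hsec Hzeta i j Hi Hj.
  assert (HnK : 0 < INR n * K) by (apply Rmult_lt_0_compat; [apply lt_0_INR; lia|lra]).
  assert (HzZ : Z < Cmod zeta) by lra.
  destruct (nat_bounded_choice (fun _ _ => RtoC 0) _ n (Hsol zeta Hsec HzZ)) as [D HD].
  replace (4 * K / Cmod zeta) with (4 * (K / Cmod zeta)) by (field; lra).
  apply (shift_matrix_near_diagonal N zeta b B _ omega _ (y zeta) D); try lia.
  - apply Cmod_gt_0. lra.
  - lra.
  - apply Rlt_le, Rdiv_lt_0_compat; lra.
  - rewrite HN. apply (Rmult_le_reg_r (2 * Cmod zeta)); [lra|]. field_simplify; lra.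
  - intros i' Hi'. rewrite HN. apply Homega_root. lia.
  - intros i' j' Hi' Hj'. apply Homega_inj; lia.
  - intros i' Hi'. rewrite HN. apply HD. lia.
  - intros i' k x Hi' Hk Hx. apply HD; lia || lra.
  - intros j' x Hj'. apply Hgamma; auto. lia.
Qed.
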